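(* Let $\mathbb{K}$ be a field and let $\mathcal{L}=\{L_1,\ldots,L_d\}$ be a configuration of $d$ mutually distinct lines in $\mathbb{P}^2(\mathbb{K})$, with set of singular points $\{P_1,\ldots,P_s\}$ (points lying on at least two lines of $\mathcal{L}$), where $P_i$ has multiplicity $m_i$ (the number of lines of $\mathcal{L}$ through $P_i$), ordered so that $m_1\ge m_2\ge\cdots\ge m_s$. Then $$m_1+\cdots+m_r\le d+\binom{r}{2}\quad\text{for } r=1,\ldots,s.$$ In particular: (a) if $s\ge 3$ then $m_1+m_2+m_3\le d+3$; (b) if $s\ge 4$ then $m_1+m_2+m_3+m_4\le d+6$. *)

(* Points and lines of P^2(K) are represented by nonzero
   vectors of K^3 (homogeneous coordinates), considered up to nonzero scaling. *)
From HB Require Import structures.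
From mathcomp Require Import all_boot all_order all_algebra.
Set Implicit Arguments. Unset Strict Implicit. Unset Printing Implicit Defensive.
Import GRing.Theory.
Local Open Scope ring_scope.

Definition proj_eq (K : fieldType) (u v : 'rV[K]_3) : Prop :=
  exists c : K, c != 0 /\ v = c *: u.

Definition incid (K : fieldType) (p l : 'rV[K]_3) : bool :=
  \sum_(i < 3) p 0 i * l 0 i == 0.

Definition mult (K : fieldType) (d : nat) (L : 'I_d -> 'rV[K]_3) (p : 'rV[K]_3) : nat :=
  #|[set i : 'I_d | incid p (L i)]|.

Definition singular (K : fieldType) (d : nat) (L : 'I_d -> 'rV[K]_3) (p : 'rV[K]_3) : Prop :=
  p != 0 /\ (2 <= mult L p)%N.

(* Count the pairs of points among P_1, ..., P_r.  A line through n of them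
   accounts for 'C(n, 2) such pairs, and two distinct lines share at most one
   point, so no pair is counted twice: summing over the lines,
   \sum_i 'C(n_i, 2) <= 'C(r, 2).  Since n <= 1 + 'C(n, 2) and
   \sum_i n_i = m_1 + ... + m_r, the bound follows. *)
From HB Require Import structures.
From mathcomp Require Import all_boot all_order all_algebra zify.
Set Implicit Arguments.
Unset Strict Implicit.
Unset Printing Implicit Defensive.
Import GRing.Theory.
Local Open Scope ring_scope.

Lemma leq_1_add_bin2 n : (n <= 1 + 'C(n, 2))%N.
Proof. by case: n => [|[|n]] //; rewrite binS bin1; lia. Qed.

Lemma card_set_sum (T : finType) (b : pred T) :
  #|[set x | b x]| = (\sum_x (b x : nat))%N.
Proof. by rewrite -sum1_card big_mkcond; apply: eq_bigr => x _; rewrite inE. Qed.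

Lemma sum_card_exchange (T I : finType) (A : {pred T}) (R : T -> I -> bool) :
  (\sum_(x in A) #|[set i | R x i]| = \sum_i #|[set x in A | R x i]|)%N.
Proof.
under eq_bigr do rewrite card_set_sum.
rewrite exchange_big; apply: eq_bigr => i _.
by rewrite card_set_sum big_mkcond; apply: eq_bigr => x _; case: (x \in A).
Qed.

Section PairCounting.

Variables (T I : finType) (inc : T -> I -> bool) (A : {set T}).

Hypothesis two_points_one_line : forall x y i j,
  x \in A -> y \in A -> x != y ->
  inc x i -> inc y i -> inc x j -> inc y j -> i = j.

Lemma sum_bin2_on_line : (\sum_i 'C(#|[set x in A | inc x i]|, 2) <= 'C(#|A|, 2))%N.
Proof.
pose pairs := [set B : {set T} | B \subset A & #|B| == 2].
have pairs_on_line (i : I) :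
    [set B : {set T} | B \subset [set x in A | inc x i] & #|B| == 2] =
    [set B in pairs | B \subset [set x in A | inc x i]].
  apply/setP => B; rewrite !inE.
  case BS: (B \subset [set x in A | inc x i]); rewrite ?andbF //=.
  by rewrite (subset_trans BS) ?andbT //; apply/subsetP => x; rewrite inE => /andP[].
under eq_bigr do rewrite -cards_draws pairs_on_line.
rewrite -cards_draws -/pairs -sum_card_exchange -sum1_card leq_sum // => B.
rewrite inE => /andP[BA /cards2P[x [y [xy defB]]]].
apply/card_le1_eqP => i j; rewrite !inE => BSi BSj.
have [xB yB] : x \in B /\ y \in B by rewrite defB !inE !eqxx orbT.
move: (subsetP BSi x xB) (subsetP BSi y yB) (subsetP BSj x xB) (subsetP BSj y yB).
rewrite !inE => /andP[xA xi] /andP[yA yi] /andP[_ xj] /andP[_ yj].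
exact: two_points_one_line _ _ _ _ xA yA xy xj yj xi yi.
Qed.

Lemma sum_card_incident : (\sum_(x in A) #|[set i | inc x i]| <= #|I| + 'C(#|A|, 2))%N.
Proof.
rewrite sum_card_exchange.
apply: (@leq_trans (\sum_i (1 + 'C(#|[set x in A | inc x i]|, 2))));
  first by apply: leq_sum => i _; apply: leq_1_add_bin2.
by rewrite big_split sum_nat_const muln1 leq_add2l sum_bin2_on_line.
Qed.

End PairCounting.

Section ProjectivePlane.

Variable K : fieldType.

Lemma incid_mulmx_tr (p l : 'rV[K]_3) : incid p l -> p *m l^T = 0.
Proof.
move=> /eqP pl; apply/rowP => j; rewrite !mxE (ord1 j) -[RHS]pl.
by apply: eq_bigr => i _; rewrite !mxE.
Qed.

Lemma proj_eq_rank1 m (E : 'M[K]_(m, 3)) (p q : 'rV[K]_3) :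
  \rank E = 1%N -> p != 0 -> q != 0 -> (p <= E)%MS -> (q <= E)%MS -> proj_eq p q.
Proof.
move=> rkE p0 q0 pE qE.
have := (mxrank_leqif_eq pE).2; rewrite rank_rV p0 rkE eqxx => /esym/andP[_ Ep].
have /sub_rVP[c defq] := submx_trans qE Ep.
by exists c; split=> //; apply: contraNneq q0 => c0; rewrite defq c0 scale0r.
Qed.

Lemma rank_col_mx_lines (l m : 'rV[K]_3) :
  l != 0 -> m != 0 -> ~ proj_eq l m -> \rank (col_mx l m) = 2%N.
Proof.
move=> l0 m0 nlm; have := submx_refl (col_mx l m).
rewrite col_mx_sub => /andP[lE mE].
apply/eqP; rewrite eqn_leq rank_leq_row ltnNge; apply/negP => rk_le1.
have rk1 : \rank (col_mx l m) = 1%N.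
  by apply/eqP; rewrite eqn_leq rk_le1 /=; have := mxrankS lE; rewrite rank_rV l0.
exact/nlm/(proj_eq_rank1 rk1 l0 m0 lE mE).
Qed.

(* The common points of l and m form the kernel of the rank-2 matrix
   [l; m]^T, which has rank 3 - 2 = 1. *)
Lemma proj_eq_common_point (l m p q : 'rV[K]_3) :
  l != 0 -> m != 0 -> ~ proj_eq l m -> p != 0 -> q != 0 ->
  incid p l -> incid q l -> incid p m -> incid q m -> proj_eq p q.
Proof.
move=> l0 m0 nlm p0 q0 pl ql pm qm.
have in_ker x : incid x l -> incid x m -> (x <= kermx (col_mx l m)^T)%MS.
  move=> xl xm; apply/sub_kermxP.
  by rewrite tr_col_mx mul_mx_row !incid_mulmx_tr // row_mx0.
apply: (proj_eq_rank1 _ p0 q0 (in_ker p pl pm) (in_ker q ql qm)).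
by rewrite mxrank_ker mxrank_tr rank_col_mx_lines.
Qed.

End ProjectivePlane.

Lemma card_prefix s r : (r <= s)%N -> #|[set k : 'I_s | (k < r)%N]| = r.
Proof.
move=> rs; rewrite -sum1_card (eq_bigl (fun k : 'I_s => (k < r)%N)) => [|k];
  last by rewrite inE.
by rewrite -(big_ord_widen _ (fun=> 1%N) rs) sum1_card card_ord.
Qed.

Theorem lemma2 (K : fieldType) (d : nat) (L : 'I_d -> 'rV[K]_3)
    (s : nat) (P : 'I_s -> 'rV[K]_3) :
  (* d mutually distinct lines *)
  (forall i, L i != 0) ->
  (forall i j, i != j -> ~ proj_eq (L i) (L j)) ->
  (* P_1, ..., P_s is exactly the (pairwise distinct) set of singular points *)
  (forall k, singular L (P k)) ->
  (forall k l, k != l -> ~ proj_eq (P k) (P l)) ->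
  (forall Q, singular L Q -> exists k, proj_eq (P k) Q) ->
  (* ordered by nonincreasing multiplicity *)
  (forall k l : 'I_s, (k <= l)%N -> (mult L (P l) <= mult L (P k))%N) ->
  (forall r, (1 <= r <= s)%N ->
     (\sum_(k < s | (k < r)%N) mult L (P k) <= d + 'C(r, 2))%N)
  /\ ((3 <= s)%N -> (\sum_(k < s | (k < 3)%N) mult L (P k) <= d + 3)%N)
  /\ ((4 <= s)%N -> (\sum_(k < s | (k < 4)%N) mult L (P k) <= d + 6)%N).
Proof.
move=> L0 Ldist Psing Pdist _ _.
have meet x y i j : x != y ->
    incid (P x) (L i) -> incid (P y) (L i) -> incid (P x) (L j) -> incid (P y) (L j) -> i = j.
  move=> xy xi yi xj yj; have [//|ij] := eqVneq i j; case: (Pdist x y xy).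
  exact: proj_eq_common_point (L0 i) (L0 j) (Ldist i j ij) (Psing x).1 (Psing y).1 _ _ _ _.
have bound r : (r <= s)%N ->
    (\sum_(k < s | (k < r)%N) mult L (P k) <= d + 'C(r, 2))%N.
  pose A := [set k : 'I_s | (k < r)%N].
  move=> rs; rewrite (eq_bigl (fun k => k \in A)) => [|k]; last by rewrite inE.
  have := sum_card_incident (A := A) (fun x y i j _ _ => meet x y i j).
  by rewrite card_ord card_prefix.
split; first by move=> r /andP[_ rs]; exact: bound.
by split=> [/(bound 3%N) | /(bound 4%N)].
Qed.
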